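(* Consider the faulty-starter delivery problem described in the context, with finisher starting position $(x,y)\neq(0,0)$, $y\ge0$, and $(x,y)\in\overline{D}(1,1)$. Then for every $a\in[0,1]$ and every algorithm $\mathcal{A}_a$ of the class described in the context, $\min\{\mathrm{CR}_{\mathcal{A}_d},\mathrm{CR}_{\mathcal{A}_0}\}\le \mathrm{CR}_{\mathcal{A}_a}$.
   Context: Setting. In the plane let $S=(0,0)$ and $T=(1,0)$. A ''starter'' drone carrying a package starts at $S$ at time $0$ and moves at unit speed along $\overline{ST}$ towards $T$. At an unknown time $t\in[0,1]$ it fails and stays forever at $(t,0)$ with the package (at time $s$ the package is at $(\min\{s,t\},0)$). A ''finisher'' drone starts at time $0$ at $P=(x,y)$ with $y\ge0$, moves at unit speed and can stop and turn instantaneously. The package can be handed over only when the drones are co-located; it is delivered at the first time the finisher, carrying the package, is at $T$. An online algorithm $\mathcal{A}$ specifies the finisher's trajectory using only $(x,y)$; $A(t)$ is its delivery time for fail time $t$. $\mathrm{Opt}(t)=\max\{1,\sqrt{(x-t)^2+y^2}+1-t\}$ is the optimal offline delivery time. $\mathrm{CR}_{\mathcal{A}}(t)=A(t)/\mathrm{Opt}(t)$ and $\mathrm{CR}_{\mathcal{A}}=\sup_{0\le t\le1}\mathrm{CR}_{\mathcal{A}}(t)$. $\overline{D}(c,r)$ denotes the closed disk of radius $r$ centered at $(c,0)$. Algorithms. $\mathcal{A}_0$: the finisher goes straight to $S$, then along $\overline{ST}$ towards $T$ until it finds the package, then on to $T$. $\mathcal{A}_d$ (for $x>0$): with $d=(x^2+y^2)/(2x)$,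 the finisher goes straight to $(d,0)$, then towards $S$ along the segment until it finds the package, then goes to $T$. For $a\in[0,1]$, an algorithm $\mathcal{A}_a$ is any online algorithm in which the finisher moves from $P$ along a straight line to $(a,0)$ and afterwards remains within $\overline{ST}$ until it picks up the package, after which it goes to $T$. *)

From HB Require Import structures.
From mathcomp Require Import all_boot all_order all_algebra.
From mathcomp Require Import all_classical all_reals.
From mathcomp Require Import ereal.
Set Implicit Arguments. Unset Strict Implicit. Unset Printing Implicit Defensive.
Import Order.TTheory GRing.Theory Num.Theory.
Local Open Scope ring_scope.
Local Open Scope classical_set_scope.

Section Delivery.
Variable R : realType.

Definition dist (p q : R * R) : R :=
  Num.sqrt ((p.1 - q.1) ^+ 2 + (p.2 - q.2) ^+ 2).

(* position of the package at time s when the starter fails at time t *)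
Definition pkg (t s : R) : R * R := (Num.min s t, 0).

(* point at time s on the unit-speed straight motion from p towards q
   (total length L = dist p q); meaningful for 0 <= s <= L *)
Definition seg (p q : R * R) (s : R) : R * R :=
  let L := dist p q in
  ((1 - s / L) * p.1 + (s / L) * q.1, (1 - s / L) * p.2 + (s / L) * q.2).

(* f is a finisher (pre-pickup) trajectory starting at P, speed at most 1 *)
Definition trajectory (P : R * R) (f : R -> R * R) : Prop :=
  f 0 = P /\
  forall s1 s2, 0 <= s1 -> 0 <= s2 -> dist (f s1) (f s2) <= `|s1 - s2|.

(* Delivery time for fail time t: the package is picked up at a time s when
   finisher and package are co-located (the earliest such time is optimal,
   since s + 1 - min s t is nondecreasing in s); then the finisher goes
   straight to T = (1,0), at distance 1 - min s t.  +oo if never met. *)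
Definition delivery (f : R -> R * R) (t : R) : \bar R :=
  ereal_inf [set ((s + 1 - Num.min s t)%:E) | s in
               [set s | 0 <= s /\ f s = pkg t s]].

Definition Opt (x y t : R) : R := Num.max 1 (dist (x, y) (t, 0) + 1 - t).

Definition CR (x y : R) (f : R -> R * R) : \bar R :=
  ereal_sup [set (delivery f t * ((Opt x y t)^-1)%:E)%E | t in `[0, 1]].

Definition traj0 (x y : R) (s : R) : R * R :=
  let L := dist (x, y) (0, 0) in
  if s <= L then seg (x, y) (0, 0) s else (Num.min (s - L) 1, 0).

Definition dpt (x y : R) : R := (x ^+ 2 + y ^+ 2) / (2 * x).

Definition trajd (x y : R) (s : R) : R * R :=
  let d := dpt x y in
  let L := dist (x, y) (d, 0) in
  if s <= L then seg (x, y) (d, 0) s else (Num.max (d - (s - L)) 0, 0).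

Definition alg_a (x y a : R) (f : R -> R * R) : Prop :=
  trajectory (x, y) f /\
  (forall s, 0 <= s <= dist (x, y) (a, 0) -> f s = seg (x, y) (a, 0) s) /\
  (forall s, dist (x, y) (a, 0) <= s -> (f s).2 = 0 /\ 0 <= (f s).1 <= 1).

End Delivery.

From HB Require Import structures.
From mathcomp Require Import all_boot all_order all_algebra.
From mathcomp Require Import all_classical all_reals.
From mathcomp Require Import ereal.
From mathcomp Require Import ring lra.
Import Order.TTheory GRing.Theory Num.Theory.
Local Open Scope ring_scope.

(* Let d := dpt x y, the abscissa of the point of ST equidistant from P and S.
   A_d delivers within 1 if t >= d and within 1 + 2d - 2t if t < d, so it is
   enough to match these costs.  If y = 0, Opt itself does.  Otherwise the
   finisher of A_a is off the axis before reaching (a,0).  If d <= a, then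
   |P - (a,0)| + a >= 2d and every pickup costs at least 1 + 2d - 2t.  If a < d,
   the finisher never catches the moving package.  Then either
   CR(A_a) >= |P| + 1 >= CR(A_0), or A_a picks up at 1 before time |P| + 1;
   in that case, whenever A_a beats A_d at some t < d, its finisher visits
   (t,0), then (1,0), then S, so A_a(0) >= 3 + |P - (t,0)| - t, and a
   polynomial inequality valid in the disk shows that the ratio at 0 then
   dominates the ratio of A_d at t. *)

Section TourInequality.
Set Implicit Arguments.
Unset Strict Implicit.
Variable R : realFieldType.

Lemma tour_poly_ge0 (L u : R) : 0 <= L <= 2 -> 0 <= u ->
  0 <= L ^+ 2 * (2 - L + 4 * u + u ^+ 2)
       + 2 * u ^+ 3 + 6 * u ^+ 2 - 6 * u * L - 2 * u ^+ 2 * L.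
Proof.
move=> /andP[L_ge0 L_le2] u_ge0.
have -> : L ^+ 2 * (2 - L + 4 * u + u ^+ 2)
          + 2 * u ^+ 3 + 6 * u ^+ 2 - 6 * u * L - 2 * u ^+ 2 * L
        = (2 - L) * ((L - 3 / 2 * u) ^+ 2 + 3 / 4 * u ^+ 2)
          + u * L ^+ 2 + u ^+ 2 * L ^+ 2 + u ^+ 2 * L + 2 * u ^+ 3.
  by field.
rewrite !addr_ge0 ?mulr_ge0 ?exprn_ge0 ?sqr_ge0 ?subr_ge0 //.
by rewrite addr_ge0 ?sqr_ge0 // mulr_ge0 ?divr_ge0 ?sqr_ge0.
Qed.

Lemma tour_ineq (x L u : R) : 0 <= L <= 2 -> L ^+ 2 <= 2 * x -> 0 <= u ->
  (x * (u + x) + u * L ^+ 2 + x * u ^+ 2) * (1 + L) <= x * (u + x) * (3 + u) * (1 + u).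
Proof.
move=> L02 Lx u_ge0; have /andP[L_ge0 L_le2] := L02.
have x_ge0 : 0 <= x by have := sqr_ge0 L; lra.
have c_ge0 : 0 <= 2 - L + 4 * u + u ^+ 2 by have := sqr_ge0 u; lra.
have Q_ge0 : 0 <= x * (2 - L + 4 * u + u ^+ 2) + u * (u ^+ 2 + 3 * u - 3 * L - u * L).
  have := tour_poly_ge0 L02 u_ge0.
  have := ler_wpM2r c_ge0 Lx; lra.
have uL : u * L ^+ 2 * (1 + L) <= u * (2 * x) * (1 + L).
  by rewrite ler_wpM2r ?ler_wpM2l //; lra.
have := mulr_ge0 x_ge0 Q_ge0.
nra.
Qed.

End TourInequality.

Section Delivery.
Set Implicit Arguments.
Unset Strict Implicit.
Variable R : realType.
Implicit Types (x y t s p q a c : R) (f : R -> R * R).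

Lemma dist_ge0 (u v : R * R) : 0 <= dist u v.
Proof. exact: sqrtr_ge0. Qed.

Lemma dist_on_axis p q : dist (p, 0) (q, 0) = `|p - q|.
Proof. by rewrite /dist /= subrr expr0n addr0 sqrtr_sqr. Qed.

Lemma sqr_dist_axis x y t : dist (x, y) (t, 0) ^+ 2 = (x - t) ^+ 2 + y ^+ 2.
Proof. by rewrite /dist /= subr0 sqr_sqrtr // addr_ge0 // sqr_ge0. Qed.

Lemma ler_dist_axis c x y t : c ^+ 2 <= (x - t) ^+ 2 + y ^+ 2 -> c <= dist (x, y) (t, 0).
Proof.
move=> h; apply: le_trans (ler_norm c) _.
by rewrite -sqrtr_sqr /dist /= subr0 ler_wsqrtr.
Qed.

Lemma ltr_dist_axis c x y t : c ^+ 2 < (x - t) ^+ 2 + y ^+ 2 -> c < dist (x, y) (t, 0).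
Proof.
move=> h; apply: le_lt_trans (ler_norm c) _.
by rewrite -sqrtr_sqr /dist /= subr0 ltr_sqrt // (le_lt_trans (sqr_ge0 c)).
Qed.

Lemma dist_origin_gt0 x y : (x, y) != (0, 0) -> 0 < dist (x, y) (0, 0).
Proof.
move=> P0; apply: ltr_dist_axis; rewrite expr2 mul0r subr0 lt0r addr_ge0 ?sqr_ge0 // andbT.
by rewrite paddr_eq0 ?sqr_ge0 // !sqrf_eq0 -xpair_eqE.
Qed.

Lemma disk_x_gt0 x y : (x, y) != (0, 0) -> (x - 1) ^+ 2 + y ^+ 2 <= 1 -> 0 < x.
Proof.
move=> /dist_origin_gt0 L_gt0 disk.
have : 0 < x ^+ 2 + y ^+ 2 by rewrite -[x in x ^+ 2](subr0 x) -sqr_dist_axis exprn_gt0.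
have : (x - 1) ^+ 2 = x ^+ 2 - 2 * x + 1 by ring.
lra.
Qed.

Lemma seg_end (u v : R * R) : 0 < dist u v -> seg u v (dist u v) = v.
Proof.
by move=> uv; rewrite /seg divff ?gt_eqF // subrr !mul0r !add0r !mul1r -surjective_pairing.
Qed.

Lemma trajectory_axis_lip P f s1 s2 p q : trajectory P f -> 0 <= s1 -> 0 <= s2 ->
  f s1 = (p, 0) -> f s2 = (q, 0) -> `|p - q| <= `|s1 - s2|.
Proof. by move=> [_ lip] ? ? e1 e2; have := lip s1 s2; rewrite e1 e2 dist_on_axis; apply. Qed.

Lemma trajectory_visit_order P f s1 s2 p q : trajectory P f -> 0 <= s1 -> 0 <= s2 ->
  f s1 = (p, 0) -> f s2 = (q, 0) -> s1 + `|p - q| <= s2 \/ s2 + `|p - q| <= s1.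
Proof.
move=> fP s1_ge0 s2_ge0 e1 e2.
have := trajectory_axis_lip fP s1_ge0 s2_ge0 e1 e2.
case: (leP s1 s2) => h.
  by rewrite [`|s1 - s2|]distrC [`|s2 - s1|]ger0_norm ?subr_ge0 // => ?; left; lra.
by rewrite [`|s1 - s2|]ger0_norm ?subr_ge0 ?(ltW h) // => ?; right; lra.
Qed.

Lemma trajectory_reach x y f s p : trajectory (x, y) f -> 0 <= s ->
  f s = (p, 0) -> dist (x, y) (p, 0) <= s.
Proof.
move=> [f0 lip] s_ge0 e.
by have := lip 0 s (lexx 0) s_ge0; rewrite f0 e sub0r normrN ger0_norm.
Qed.

Lemma delivery_ge f t c :
  (forall s, 0 <= s -> f s = pkg t s -> c <= s + 1 - Num.min s t) ->
  (c%:E <= delivery f t)%E.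
Proof.
by move=> lb; apply: le_ereal_inf_tmp => _ [s [s_ge0 fs] <-]; rewrite lee_fin lb.
Qed.

Lemma delivery_le f t s : 0 <= s -> f s = pkg t s ->
  (delivery f t <= (s + 1 - Num.min s t)%:E)%E.
Proof. by move=> s_ge0 fs; apply: ereal_inf_lbound; exists s. Qed.

Lemma delivery_lt f t c : (delivery f t < c%:E)%E ->
  exists s, [/\ 0 <= s, f s = pkg t s & s + 1 - Num.min s t < c].
Proof. by move=> /ereal_inf_lt[_ [s [s_ge0 fs] <-]]; rewrite lte_fin; exists s. Qed.

Lemma delivery_ge1 f t : (1%:E <= delivery f t)%E.
Proof.
apply: delivery_ge => s _ _.
have : Num.min s t <= s by rewrite ge_min lexx.
lra.
Qed.

Lemma Opt_ge1 x y t : 1 <= Opt x y t.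
Proof. by rewrite le_max lexx. Qed.

Lemma Opt_gt0 x y t : 0 < Opt x y t.
Proof. exact: lt_le_trans ltr01 (Opt_ge1 x y t). Qed.

Lemma Opt_ge_dist x y t : dist (x, y) (t, 0) + 1 - t <= Opt x y t.
Proof. by rewrite le_max lexx orbT. Qed.

Lemma Opt0 x y : Opt x y 0 = dist (x, y) (0, 0) + 1.
Proof. by rewrite /Opt subr0 max_r // lerDr dist_ge0. Qed.

Lemma Opt1 x y : (x - 1) ^+ 2 + y ^+ 2 <= 1 -> Opt x y 1 = 1.
Proof.
move=> disk; rewrite /Opt max_l // addrK.
by rewrite /dist /= subr0 -[leRHS]sqrtr1 ler_sqrt.
Qed.

Definition ratio x y f t : \bar R := (delivery f t * ((Opt x y t)^-1)%:E)%E.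

Lemma ratio_ge x y f t c : (c%:E <= delivery f t)%E ->
  ((c / Opt x y t)%:E <= ratio x y f t)%E.
Proof. by move=> lb; rewrite EFinM lee_wpmul2r // lee_fin invr_ge0 ltW ?Opt_gt0. Qed.

Lemma ratio_le x y f t c : (delivery f t <= c%:E)%E ->
  (ratio x y f t <= (c / Opt x y t)%:E)%E.
Proof. by move=> ub; rewrite EFinM lee_wpmul2r // lee_fin invr_ge0 ltW ?Opt_gt0. Qed.

Lemma ratio_le_CR x y f t : 0 <= t <= 1 -> (ratio x y f t <= CR x y f)%E.
Proof. by move=> t01; apply: ereal_sup_ubound; exists t; rewrite /= ?in_itv. Qed.

Lemma CR_le x y f M : (forall t, 0 <= t <= 1 -> (ratio x y f t <= M)%E) ->
  (CR x y f <= M)%E.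
Proof.
by move=> ub; apply: ge_ereal_sup => _ [t t01 <-]; apply: ub; rewrite /= in_itv in t01.
Qed.

Lemma delivery1_le_CR x y f : (x - 1) ^+ 2 + y ^+ 2 <= 1 ->
  (delivery f 1 <= CR x y f)%E.
Proof.
move=> disk; have := ratio_le_CR x y f (t := 1).
by rewrite /ratio Opt1 // invr1 mule1; apply; rewrite ler01 lexx.
Qed.

Lemma CR_ge1 x y f : (x - 1) ^+ 2 + y ^+ 2 <= 1 -> (1%:E <= CR x y f)%E.
Proof. by move=> disk; apply: le_trans (delivery_ge1 f 1) (delivery1_le_CR f disk). Qed.

Section AlgorithmD.
Variables x y : R.
Hypothesis x_gt0 : 0 < x.

Lemma mul2_dpt : 2 * x * dpt x y = x ^+ 2 + y ^+ 2.
Proof. by rewrite /dpt; field; rewrite gt_eqF. Qed.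

Lemma dpt_gt0 : 0 < dpt x y.
Proof.
rewrite /dpt divr_gt0 ?mulr_gt0 // (lt_le_trans (exprn_gt0 2 x_gt0)) //.
by rewrite lerDl sqr_ge0.
Qed.

Lemma dist_dpt : dist (x, y) (dpt x y, 0) = dpt x y.
Proof.
have e : (x - dpt x y) ^+ 2 + y ^+ 2 = dpt x y ^+ 2.
  have -> : y ^+ 2 = 2 * x * dpt x y - x ^+ 2 by rewrite mul2_dpt addrAC subrr add0r.
  ring.
by rewrite /dist /= subr0 e sqrtr_sqr ger0_norm ?(ltW dpt_gt0).
Qed.

Lemma trajd_dpt : trajd x y (dpt x y) = (dpt x y, 0).
Proof.
rewrite /trajd dist_dpt lexx.
by have := @seg_end (x, y) (dpt x y, 0); rewrite dist_dpt; apply; exact: dpt_gt0.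
Qed.

Lemma delivery_trajd_late t : dpt x y <= t -> (delivery (trajd x y) t <= 1%:E)%E.
Proof.
move=> dt; have := delivery_le (ltW dpt_gt0) (_ : trajd x y (dpt x y) = pkg t (dpt x y)).
by rewrite min_l // addrAC subrr add0r; apply; rewrite trajd_dpt /pkg min_l.
Qed.

Lemma delivery_trajd_early t : 0 <= t < dpt x y ->
  (delivery (trajd x y) t <= (1 + 2 * dpt x y - 2 * t)%:E)%E.
Proof.
set d := dpt x y; move=> /andP[t_ge0 td].
have e : 1 + 2 * d - 2 * t = (2 * d - t) + 1 - Num.min (2 * d - t) t.
  by rewrite min_r; lra.
rewrite e; apply: delivery_le; first lra.
rewrite /trajd dist_dpt -/d ifF; last by apply/negbTE; rewrite -ltNge; lra.
by rewrite /pkg min_r ?max_l; [congr pair; ring | lra | lra].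
Qed.

Lemma CR_trajd_le M : (1%:E <= M)%E ->
  (forall t, 0 <= t < dpt x y -> (((1 + 2 * dpt x y - 2 * t) / Opt x y t)%:E <= M)%E) ->
  (CR x y (trajd x y) <= M)%E.
Proof.
move=> M_ge1 early; apply: CR_le => t /andP[t_ge0 _].
case: (leP (dpt x y) t) => dt; last first.
  by apply: le_trans (ratio_le x y (delivery_trajd_early _)) (early _ _); rewrite t_ge0.
apply: le_trans M_ge1; apply: le_trans (ratio_le x y (delivery_trajd_late dt)) _.
by rewrite lee_fin ler_pdivrMr ?Opt_gt0 // mul1r Opt_ge1.
Qed.

End AlgorithmD.

Lemma dpt_le1 x y : 0 < x -> (x - 1) ^+ 2 + y ^+ 2 <= 1 -> dpt x y <= 1.
Proof. by move=> x_gt0; move: (dpt x y) (mul2_dpt y x_gt0) => d ed; nra. Qed.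

Lemma delivery_traj0 x y t : (x, y) != (0, 0) -> 0 <= t <= 1 ->
  (delivery (traj0 x y) t <= (dist (x, y) (0, 0) + 1)%:E)%E.
Proof.
move=> /dist_origin_gt0 L_gt0 /andP[t_ge0 t_le1]; set L := dist _ _ in L_gt0 *.
have -> : L + 1 = (L + t) + 1 - Num.min (L + t) t by rewrite min_r; lra.
apply: delivery_le; first lra.
rewrite /traj0 -/L /pkg; case: ifP => [Lt | /negbT Lt].
  have t0 : t = 0 by lra.
  by rewrite t0 addr0 min_r ?(ltW L_gt0) // seg_end.
by rewrite addrAC subrr add0r min_l // min_r //; lra.
Qed.

Lemma CR_traj0_le x y : (x, y) != (0, 0) ->
  (CR x y (traj0 x y) <= (dist (x, y) (0, 0) + 1)%:E)%E.
Proof.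
move=> P0; apply: CR_le => t t01.
apply: le_trans (ratio_le x y (delivery_traj0 P0 t01)) _.
rewrite lee_fin ler_pdivrMr ?Opt_gt0 // ler_peMr ?Opt_ge1 //.
by rewrite addr_ge0 ?dist_ge0.
Qed.

Lemma tour_cost_ge x y t : 0 < x -> (x - 1) ^+ 2 + y ^+ 2 <= 1 -> 0 <= t < dpt x y ->
  (1 + 2 * dpt x y - 2 * t) * (1 + dist (x, y) (0, 0))
  <= (3 + dist (x, y) (t, 0) - t) * (1 + dist (x, y) (t, 0) - t).
Proof.
move=> x_gt0 disk /andP[t_ge0 td]; have ed := mul2_dpt y x_gt0.
have eL := sqr_dist_axis x y 0; have eD := sqr_dist_axis x y t; rewrite subr0 in eL.
have L_ge0 := dist_ge0 (x, y) (0, 0); have D_ge0 := dist_ge0 (x, y) (t, 0).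
set d := dpt x y in td ed *; set L := dist _ (0, 0) in eL L_ge0 *.
set D := dist _ (t, 0) in eD D_ge0 *.
have tD : t <= D by apply: ler_dist_axis; nra.
have L_le2x : L ^+ 2 <= 2 * x by nra.
have L_le2 : L <= 2.
  by rewrite -(@ler_pXn2r _ 2) ?nnegrE //; have := sqr_ge0 y; nra.
have eu : 2 * t * (D - t) + 2 * x * t = L ^+ 2 - (D - t) ^+ 2 by nra.
have e : x * (D - t + x) * (1 + 2 * d - 2 * t)
    = x * (D - t + x) + (D - t) * L ^+ 2 + x * (D - t) ^+ 2.
  have -> : x * (D - t + x) * (1 + 2 * d - 2 * t)
      = x * (D - t + x) + (D - t + x) * (2 * x * d) - x * (2 * t * (D - t) + 2 * x * t).
    by ring.
  by rewrite ed -eL eu; ring.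
have xu_gt0 : 0 < x * (D - t + x) by rewrite mulr_gt0 //; lra.
rewrite -(ler_pM2l xu_gt0) mulrA e.
have -> : x * (D - t + x) * ((3 + D - t) * (1 + D - t))
    = x * (D - t + x) * (3 + (D - t)) * (1 + (D - t)) by ring.
by apply: tour_ineq; rewrite ?L_ge0 ?subr_ge0.
Qed.

Lemma tour_ratio_ge x y t : 0 < x -> (x - 1) ^+ 2 + y ^+ 2 <= 1 -> 0 <= t < dpt x y ->
  (1 + 2 * dpt x y - 2 * t) / Opt x y t <= (3 + dist (x, y) (t, 0) - t) / Opt x y 0.
Proof.
move=> x_gt0 disk td; have /andP[_ t_lt_d] := td.
have D_ge0 := dist_ge0 (x, y) (t, 0); have d_le1 := dpt_le1 x_gt0 disk.
rewrite Opt0 ler_pdivrMr ?Opt_gt0 // mulrAC ler_pdivlMr ?ltr_wpDl ?dist_ge0 // [_ + 1]addrC.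
apply: le_trans (tour_cost_ge x_gt0 disk td) (ler_wpM2l _ _); first lra.
by apply: le_trans _ (Opt_ge_dist x y t); lra.
Qed.

Lemma delivery0_ge_tour x y f t st s1 : trajectory (x, y) f -> 0 <= t <= 1 ->
  0 <= st -> f st = (t, 0) -> st < 2 - t ->
  1 <= s1 -> f s1 = (1, 0) -> s1 < dist (x, y) (0, 0) + 1 ->
  ((3 + dist (x, y) (t, 0) - t)%:E <= delivery f 0)%E.
Proof.
move=> fP /andP[t_ge0 t_le1] st_ge0 fst st_lt s1_ge1 fs1 s1_lt.
have s1_ge0 : 0 <= s1 by lra.
have st_s1 : st + (1 - t) <= s1.
  have := trajectory_visit_order fP st_ge0 s1_ge0 fst fs1.
  by rewrite distrC ger0_norm ?subr_ge0 //; case=> //; lra.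
have Dst := trajectory_reach fP st_ge0 fst.
apply: delivery_ge => s0 s0_ge0; rewrite /pkg min_r // => fs0.
have L0s0 := trajectory_reach fP s0_ge0 fs0.
by have := trajectory_visit_order fP s1_ge0 s0_ge0 fs1 fs0; rewrite subr0 normr1; case; lra.
Qed.

Section AlgorithmA.
Variables (x y a : R) (f : R -> R * R).
Hypotheses (fA : alg_a x y a f) (y_gt0 : 0 < y).

Lemma dist_axis_gt0 : 0 < dist (x, y) (a, 0).
Proof. by apply: ltr_dist_axis; rewrite expr2 mul0r ltr_wpDl ?sqr_ge0 ?exprn_gt0. Qed.

Lemma alg_a_reach : f (dist (x, y) (a, 0)) = (a, 0).
Proof. by rewrite fA.2.1 ?seg_end ?dist_axis_gt0 // dist_ge0 lexx. Qed.

Lemma alg_a_on_axis s p : 0 <= s -> f s = (p, 0) -> dist (x, y) (a, 0) <= s.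
Proof.
move=> s_ge0 fs; rewrite leNgt; apply/negP => sL.
have := fA.2.1 s; rewrite s_ge0 ltW // fs => /(_ isT)[_].
rewrite /= mulr0 addr0 => /esym/eqP.
rewrite mulf_eq0 (gt_eqF y_gt0) orbF subr_eq0 eq_sym lt_eqF //.
by rewrite ltr_pdivrMr ?dist_axis_gt0 ?mul1r.
Qed.

Lemma alg_a_pickup s p : 0 <= s -> f s = (p, 0) -> `|p - a| <= s - dist (x, y) (a, 0).
Proof.
move=> s_ge0 fs; have Ls := alg_a_on_axis s_ge0 fs.
have := trajectory_axis_lip fA.1 s_ge0 (dist_ge0 _ _) fs alg_a_reach.
by rewrite [`|s - _|]ger0_norm ?subr_ge0.
Qed.

Lemma alg_a_pickup_late s t : a < dist (x, y) (a, 0) -> 0 <= s -> f s = pkg t s -> t <= s.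
Proof.
move=> aL s_ge0 fs; rewrite leNgt; apply/negP => st.
have := alg_a_pickup s_ge0 fs; rewrite min_l ?(ltW st) //.
have := ler_norm (s - a); lra.
Qed.

End AlgorithmA.

Lemma CR_trajd_axis x : 0 < x -> (CR x 0 (trajd x 0) <= 1%:E)%E.
Proof.
move=> x_gt0; apply: CR_trajd_le => // t /andP[t_ge0 td].
have ed := mul2_dpt 0 x_gt0.
rewrite lee_fin ler_pdivrMr ?Opt_gt0 // mul1r (le_trans _ (Opt_ge_dist _ _ _)) // dist_on_axis.
by have := ler_norm (x - t); nra.
Qed.

Lemma CR_trajd_le_alg_a_dpt_le x y a f : 0 < x -> (x - 1) ^+ 2 + y ^+ 2 <= 1 -> 0 < y ->
  alg_a x y a f -> dpt x y <= a -> (CR x y (trajd x y) <= CR x y f)%E.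
Proof.
move=> x_gt0 disk y_gt0 fA da.
apply: CR_trajd_le (CR_ge1 f disk) _ => // t /andP[t_ge0 td].
have d_le1 := dpt_le1 x_gt0 disk; have ed := mul2_dpt y x_gt0.
apply: le_trans (ratio_le_CR x y f (t := t) _); last by rewrite t_ge0; lra.
apply: ratio_ge; apply: delivery_ge => s s_ge0 fs.
have x_le2d : x <= 2 * dpt x y by have := sqr_ge0 y; nra.
have La : 2 * dpt x y - a <= dist (x, y) (a, 0).
  apply: ler_dist_axis.
  have : 0 <= (a - dpt x y) * (2 * dpt x y - x) by rewrite mulr_ge0 // subr_ge0.
  nra.
have := alg_a_pickup fA y_gt0 s_ge0 fs.
have : Num.min s t <= t by rewrite ge_min lexx orbT.
have := ler_norm (a - Num.min s t); rewrite distrC; lra.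
Qed.

Lemma CR_trajd_le_alg_a_lt_dpt x y a f : 0 < x -> (x - 1) ^+ 2 + y ^+ 2 <= 1 -> 0 < y ->
  alg_a x y a f -> a < dpt x y -> (CR x y f < (dist (x, y) (0, 0) + 1)%:E)%E ->
  (CR x y (trajd x y) <= CR x y f)%E.
Proof.
move=> x_gt0 disk y_gt0 fA ad CR_lt; have ed := mul2_dpt y x_gt0.
have aL : a < dist (x, y) (a, 0) by apply: ltr_dist_axis; nra.
have late := alg_a_pickup_late fA y_gt0 aL.
have d_le1 := dpt_le1 x_gt0 disk.
have : (delivery f 1 < (dist (x, y) (0, 0) + 1)%:E)%E.
  exact: le_lt_trans (delivery1_le_CR f disk) CR_lt.
case/delivery_lt => s1 [s1_ge0 fs1 s1_lt].
have s1_ge1 := late _ _ s1_ge0 fs1; rewrite /pkg min_r // in fs1 s1_lt.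
apply: CR_trajd_le (CR_ge1 f disk) _ => // t /andP[t_ge0 td].
have t01 : 0 <= t <= 1 by rewrite t_ge0; lra.
case: (leP ((1 + 2 * dpt x y - 2 * t)%:E) (delivery f t)) => [lb | ].
  exact: le_trans (ratio_ge x y lb) (ratio_le_CR x y f t01).
case/delivery_lt => st [st_ge0 fst st_lt].
have t_st := late _ _ st_ge0 fst; rewrite /pkg min_r // in fst st_lt.
have tour : ((3 + dist (x, y) (t, 0) - t)%:E <= delivery f 0)%E.
  by apply: delivery0_ge_tour fA.1 t01 st_ge0 fst _ s1_ge1 fs1 _; lra.
apply: le_trans (ratio_le_CR x y f (t := 0) _); last by rewrite lexx ler01.
by apply: le_trans (ratio_ge x y tour); rewrite lee_fin tour_ratio_ge // t_ge0.
Qed.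

End Delivery.

Theorem lemma3 (R : realType) (x y : R) :
  (x, y) != (0, 0) -> 0 <= y -> (x - 1) ^+ 2 + y ^+ 2 <= 1 ->
  forall (a : R), 0 <= a <= 1 ->
  forall (f : R -> R * R), alg_a x y a f ->
  (Order.min (CR x y (trajd x y)) (CR x y (traj0 x y)) <= CR x y f)%E.
Proof.
move=> P0 y_ge0 disk a _ f fA.
have x_gt0 := disk_x_gt0 P0 disk.
have CRf_ge1 := CR_ge1 f disk.
rewrite ge_min; move: y_ge0; rewrite le_eqVlt => /orP[/eqP y0 | y_gt0].
  by subst y; rewrite (le_trans (CR_trajd_axis x_gt0) CRf_ge1).
have [da | ad] := leP (dpt x y) a.
  by rewrite (CR_trajd_le_alg_a_dpt_le x_gt0 disk y_gt0 fA da).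
have [CR_ge | CR_lt] := leP ((dist (x, y) (0, 0) + 1)%:E) (CR x y f).
  by rewrite (le_trans (CR_traj0_le P0) CR_ge) orbT.
by rewrite (CR_trajd_le_alg_a_lt_dpt x_gt0 disk y_gt0 fA ad CR_lt).
Qed.
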